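(* Let $N\geq 2$ be an integer and let $s_m,\sigma_x,\sigma_r,R_M$ be positive constants. Let $(s_i^0)_{1\leq i\leq N}\in(\mathbb{R}_+^* )^N$ and let $(x_i,y_i,S_i,\gamma_i)_{1\leq i\leq N}\in(\mathbb{R}^2\times(\mathbb{R}_+^* )^2)^N$, with $\log(S_i/s_m)\leq R_M$ for all $i$. Write $\vec x_i=(x_i,y_i)$ and $$C(s_i,s_j,d)=\frac{\log(s_j/s_m)}{2R_M\left(1+\frac{d^2}{\sigma_x^2}\right)}\left(1+\tanh\left(\frac{1}{\sigma_r}\log\frac{s_j}{s_i}\right)\right).$$ Then the system $$s_i(0)=s_i^0,\qquad \frac{\mathrm{d}s_i(t)}{\mathrm{d}t}=\gamma_i s_i(t)\left(\log\left(\frac{S_i}{s_m}\right)\left(1-\frac{1}{N-1}\sum_{j\neq i}C(s_i(t),s_j(t),|\vec x_i-\vec x_j|)\right)-\log\left(\frac{s_i(t)}{s_m}\right)\right),\quad 1\leq i\leq N,\ t\in\mathbb{R}_+,$$ has a unique solution $t\mapsto (s_i(t))_{1\leq i\leq N}$ defined on all of $\mathbb{R}_+$, and it takes positive values: $s_i(t)>0$ for all $t\in\mathbb{R}_+$ and all $i$.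
   Context: $|\vec x_i-\vec x_j|$ denotes the Euclidean distance in $\mathbb{R}^2$. *)

From Stdlib Require Import Reals Lra.
From Coquelicot Require Import Coquelicot.
Open Scope R_scope.

Definition dist2 (x1 y1 x2 y2 : R) : R := sqrt ((x1 - x2) ^ 2 + (y1 - y2) ^ 2).

Definition Ckernel (sm sx sr RM : R) (si sj d : R) : R :=
  ln (sj / sm) / (2 * RM * (1 + d ^ 2 / sx ^ 2))
  * (1 + tanh (/ sr * ln (sj / si))).

Definition sum_ne (N i : nat) (f : nat -> R) : R :=
  sum_f_R0 (fun j => if Nat.eq_dec j i then 0 else f j) (N - 1).

(* f has derivative f't at t as a function on [0, +oo):
   (f u - f t)/(u - t) -> f't as u -> t with u in [0,+oo), u <> t
   (one-sided at t = 0, two-sided for t > 0). *)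
Definition has_deriv_Rplus (f : R -> R) (t f't : R) : Prop :=
  filterlim (fun u => (f u - f t) / (u - t))
    (within (fun u => 0 <= u /\ u <> t) (locally t)) (locally f't).

Definition rhs (N : nat) (sm sx sr RM : R) (x y Sc gam : nat -> R)
  (s : nat -> R) (i : nat) : R :=
  gam i * s i *
  (ln (Sc i / sm) *
     (1 - / INR (N - 1) *
          sum_ne N i (fun j => Ckernel sm sx sr RM (s i) (s j) (dist2 (x i) (y i) (x j) (y j))))
   - ln (s i / sm)).

Definition is_solution (N : nat) (sm sx sr RM : R) (x y Sc gam s0 : nat -> R)
  (s : nat -> R -> R) : Prop :=
  (forall i, (i < N)%nat -> s i 0 = s0 i) /\
  (forall i t, (i < N)%nat -> 0 <= t ->
     has_deriv_Rplus (s i) t (rhs N sm sx sr RM x y Sc gam (fun j => s j t) i)).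

From Stdlib Require Import Reals Lra Lia Classical ZArith.
From Coquelicot Require Import Coquelicot.
Open Scope R_scope.

(* Writing [s_i = s_m exp u_i] turns the system into [u' = G(u)] with
   [G_i(u) = gam_i (ln (S_i / s_m) (1 - 1/(N-1) sum_(j <> i) c_ij u_j (1 + tanh ((u_j - u_i) / sigma_r)))
                    - u_i)]
   and [0 <= c_ij <= 1 / (2 R_M)].  As [|tanh| <= 1] and [tanh] is 1-Lipschitz, [G] grows at most
   linearly and is Lipschitz on bounded sets.  Gronwall's inequality for [1 + |u|^2] bounds every
   solution by [Phi(t) = (1 + |u(0)|^2) exp (kappa t)], so the solution of the system truncated at
   level [Phi(n)], obtained by Picard iteration, solves the true system on [[0, n]]; these glue into
   a global solution, unique by Gronwall again.  Conversely, as long as a solution [s] of the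
   original system is positive, [ln (s / s_m)] solves [u' = G(u)] and is bounded by [Phi], which
   keeps [s] away from [0]: by continuous induction, [s] stays positive forever. *)

Fixpoint sumN (n : nat) (f : nat -> R) : R :=
  match n with O => 0 | S k => sumN k f + f k end.

Lemma sumN_ext n f g : (forall j, (j < n)%nat -> f j = g j) -> sumN n f = sumN n g.
Proof.
  induction n as [|n IH]; intros H; simpl; [reflexivity|].
  rewrite IH, H; [reflexivity|lia|intros; apply H; lia].
Qed.

Lemma sumN_le n f g : (forall j, (j < n)%nat -> f j <= g j) -> sumN n f <= sumN n g.
Proof.
  induction n as [|n IH]; intros H; simpl; [lra|].
  apply Rplus_le_compat; [apply IH; intros; apply H|apply H]; lia.
Qed.

Lemma sumN_const n c : sumN n (fun _ => c) = INR n * c.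
Proof. induction n as [|n IH]; cbn [sumN]; [simpl; ring|]. rewrite IH, S_INR; ring. Qed.

Lemma sumN_nonneg n f : (forall j, (j < n)%nat -> 0 <= f j) -> 0 <= sumN n f.
Proof.
  intros H. apply Rle_trans with (sumN n (fun _ => 0)).
  - rewrite sumN_const; lra.
  - now apply sumN_le.
Qed.

Lemma sumN_plus n f g : sumN n (fun j => f j + g j) = sumN n f + sumN n g.
Proof. induction n as [|n IH]; simpl; [lra|]. rewrite IH; ring. Qed.

Lemma sumN_scal n c f : sumN n (fun j => c * f j) = c * sumN n f.
Proof. induction n as [|n IH]; simpl; [ring|]. rewrite IH; ring. Qed.

Lemma sumN_abs n f : Rabs (sumN n f) <= sumN n (fun j => Rabs (f j)).
Proof.
  induction n as [|n IH]; simpl; [rewrite Rabs_R0; lra|].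
  eapply Rle_trans; [apply Rabs_triang|lra].
Qed.

Lemma sumN_ge_term n f i : (i < n)%nat -> (forall j, (j < n)%nat -> 0 <= f j) ->
  f i <= sumN n f.
Proof.
  induction n as [|n IH]; simpl; intros Hi H; [lia|].
  assert (0 <= sumN n f) by (apply sumN_nonneg; intros; apply H; lia).
  destruct (Nat.eq_dec i n) as [->|Hin]; [lra|].
  assert (f i <= sumN n f) by (apply IH; [lia|intros; apply H; lia]).
  specialize (H n ltac:(lia)). lra.
Qed.

Lemma sum_f_R0_sumN n f : sum_f_R0 f n = sumN (S n) f.
Proof. induction n as [|n IH]; simpl in *; [ring|]. rewrite IH; ring. Qed.

Lemma sumN_sq_le n x : sumN n x ^ 2 <= INR n * sumN n (fun j => x j ^ 2).
Proof.
  induction n as [|n IH]; cbn [sumN]; [simpl; lra|]. rewrite S_INR.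
  assert (Hcross : 2 * x n * sumN n x <= sumN n (fun j => x j ^ 2) + INR n * x n ^ 2).
  { rewrite <- sumN_const, <- sumN_plus, <- sumN_scal.
    apply sumN_le; intros j _. pose proof (pow2_ge_0 (x j - x n)). nra. }
  replace ((sumN n x + x n) ^ 2) with (sumN n x ^ 2 + 2 * x n * sumN n x + x n ^ 2) by ring.
  lra.
Qed.

Lemma continuity_pt_sumN n (g : nat -> R -> R) x :
  (forall i, (i < n)%nat -> continuity_pt (g i) x) ->
  continuity_pt (fun t => sumN n (fun i => g i t)) x.
Proof.
  induction n as [|n IH]; intros H; cbn [sumN].
  - apply continuity_pt_const; intros ? ?; reflexivity.
  - apply (continuity_pt_plus (fun t => sumN n (fun i => g i t)) (g n));
      [apply IH; intros; apply H|apply H]; lia.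
Qed.

Lemma derivable_pt_lim_sumN n (g dg : nat -> R -> R) x :
  (forall i, (i < n)%nat -> derivable_pt_lim (g i) x (dg i x)) ->
  derivable_pt_lim (fun t => sumN n (fun i => g i t)) x (sumN n (fun i => dg i x)).
Proof.
  induction n as [|n IH]; intros H; cbn [sumN].
  - apply derivable_pt_lim_const.
  - apply (derivable_pt_lim_plus (fun t => sumN n (fun i => g i t)) (g n));
      [apply IH; intros; apply H|apply H]; lia.
Qed.

Lemma exp_le_compat x y : x <= y -> exp x <= exp y.
Proof. intros [H| ->]; [left; now apply exp_increasing|apply Rle_refl]. Qed.

Lemma lipschitz_continuity_pt f K x : 0 <= K ->
  (forall y z, Rabs (f y - f z) <= K * Rabs (y - z)) -> continuity_pt f x.
Proof.
  intros HK H eps Heps. exists (eps / (K + 1)). split; [apply Rdiv_lt_0_compat; lra|].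
  intros y [_ Hy]. simpl in *. unfold R_dist in *.
  apply Rle_lt_trans with (K * Rabs (y - x)); [apply H|].
  apply Rle_lt_trans with ((K + 1) * Rabs (y - x)); [pose proof (Rabs_pos (y - x)); nra|].
  apply Rmult_lt_reg_r with (/ (K + 1)); [apply Rinv_0_lt_compat; lra|].
  replace ((K + 1) * Rabs (y - x) * / (K + 1)) with (Rabs (y - x)) by (field; lra).
  exact Hy.
Qed.

Lemma ex_RInt_continuity_pt h a b : (forall x, continuity_pt h x) -> ex_RInt h a b.
Proof.
  intros H. apply (ex_RInt_continuous (V := R_CompleteNormedModule)).
  intros z _. apply continuity_pt_filterlim, H.
Qed.

Lemma abs_RInt_le_const_abs h a b M : (forall x, continuity_pt h x) ->
  (forall x, Rmin a b <= x <= Rmax a b -> Rabs (h x) <= M) ->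
  Rabs (RInt h a b) <= M * Rabs (b - a).
Proof.
  intros Hc Hb. destruct (Rle_dec a b) as [Hab|Hab].
  - rewrite Rmin_left, Rmax_right in Hb by lra.
    rewrite (Rabs_right (b - a)), Rmult_comm by lra.
    apply abs_RInt_le_const; auto. now apply ex_RInt_continuity_pt.
  - rewrite Rmin_right, Rmax_left in Hb by lra.
    rewrite <- opp_RInt_swap by now apply ex_RInt_continuity_pt.
    change (Rabs (- RInt h b a) <= M * Rabs (b - a)).
    rewrite Rabs_Ropp, (Rabs_left (b - a)), Rmult_comm by lra.
    replace (- (b - a)) with (a - b) by ring.
    apply abs_RInt_le_const; try lra; auto. now apply ex_RInt_continuity_pt.
Qed.

Lemma RInt_minus_lower h t t' : (forall x, continuity_pt h x) ->
  RInt h 0 t - RInt h 0 t' = RInt h t' t.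
Proof.
  intros Hc. rewrite <- (RInt_Chasles h 0 t' t) by now apply ex_RInt_continuity_pt.
  change (RInt h 0 t' + RInt h t' t - RInt h 0 t' = RInt h t' t). ring.
Qed.

Lemma RInt_minus_continuity_pt f g a b :
  (forall x, continuity_pt f x) -> (forall x, continuity_pt g x) ->
  RInt (fun x => f x - g x) a b = RInt f a b - RInt g a b.
Proof. intros Hf Hg. apply (RInt_minus f g); now apply ex_RInt_continuity_pt. Qed.

Lemma abs_RInt_le_exp f c k t : 0 < k -> 0 <= t -> (forall x, continuity_pt f x) ->
  (forall x, 0 <= x <= t -> Rabs (f x) <= c * exp (k * x)) ->
  Rabs (RInt f 0 t) <= c / k * (exp (k * t) - 1).
Proof.
  intros Hk Ht Hc Hb.
  assert (Hprim : is_RInt (fun x => c * exp (k * x)) 0 t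
                    (minus (c / k * exp (k * t)) (c / k * exp (k * 0)))).
  { apply (is_RInt_derive (fun x => c / k * exp (k * x))).
    - intros x _. auto_derive; [exact I|field; lra].
    - intros x _. apply continuity_pt_filterlim.
      apply derivable_continuous_pt. exists (c * exp (k * x) * k).
      apply is_derive_Reals. auto_derive; [exact I|ring]. }
  pose proof (norm_RInt_le f (fun x => c * exp (k * x)) 0 t (RInt f 0 t) _ Ht Hb
    (RInt_correct _ _ _ (ex_RInt_continuity_pt _ _ _ Hc)) Hprim) as H.
  change (Rabs (RInt f 0 t) <= c / k * exp (k * t) - c / k * exp (k * 0)) in H.
  rewrite Rmult_0_r, exp_0 in H. lra.
Qed.

Lemma le_0_of_le_geom a c : (forall n, a <= c * (/ 2) ^ n) -> a <= 0.
Proof.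
  intros H. destruct (Rle_dec a 0) as [|Ha]; [assumption|exfalso].
  assert (Hc : 0 < c) by (specialize (H O); simpl in H; lra).
  destruct (pow_lt_1_zero (/ 2) ltac:(rewrite Rabs_right; lra) (a / c)
              ltac:(apply Rdiv_lt_0_compat; lra)) as [n Hn].
  specialize (Hn n (le_n _)). specialize (H n).
  rewrite Rabs_right in Hn by (apply Rle_ge, pow_le; lra).
  apply (Rmult_lt_compat_l c) in Hn; [|exact Hc].
  replace (c * (a / c)) with a in Hn by (field; lra). lra.
Qed.

Section GeometricLimit.

Variable a : nat -> R.
Variable C : R.
Hypothesis a_step : forall n, Rabs (a (S n) - a n) <= C * (/ 2) ^ n.

Lemma geometric_tail n p : Rabs (a (p + n)%nat - a n) <= 2 * C * (/ 2) ^ n.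
Proof.
  assert (HC : 0 <= C) by (pose proof (a_step O); pose proof (Rabs_pos (a 1%nat - a O)); simpl in *; lra).
  assert (Htail : Rabs (a (p + n)%nat - a n) <= 2 * C * ((/ 2) ^ n - (/ 2) ^ (p + n))).
  { induction p as [|p IH].
    - rewrite !Rminus_diag, Rabs_R0. lra.
    - rewrite Nat.add_succ_l.
      replace (a (S (p + n)) - a n) with ((a (S (p + n)) - a (p + n)%nat) + (a (p + n)%nat - a n)) by ring.
      eapply Rle_trans; [apply Rabs_triang|].
      pose proof (a_step (p + n)%nat). cbn [pow]. lra. }
  pose proof (pow_le (/ 2) (p + n) ltac:(lra)). nra.
Qed.

Lemma geometric_ex_finite_lim : ex_finite_lim_seq a.
Proof.
  assert (HC : 0 <= C) by (pose proof (a_step O); pose proof (Rabs_pos (a 1%nat - a O)); simpl in *; lra).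
  apply ex_lim_seq_cauchy_corr. intros eps.
  destruct (pow_lt_1_zero (/ 2) ltac:(rewrite Rabs_right; lra) (eps / (4 * C + 1))
              ltac:(apply Rdiv_lt_0_compat; [apply cond_pos|lra])) as [n0 Hn0].
  exists n0. intros m m' Hm Hm'.
  specialize (Hn0 n0 (le_n _)). rewrite Rabs_right in Hn0 by (apply Rle_ge, pow_le; lra).
  pose proof (geometric_tail n0 (m - n0)) as Hb. pose proof (geometric_tail n0 (m' - n0)) as Hb'.
  replace (m - n0 + n0)%nat with m in Hb by lia. replace (m' - n0 + n0)%nat with m' in Hb' by lia.
  replace (a m - a m') with ((a m - a n0) - (a m' - a n0)) by ring.
  eapply Rle_lt_trans; [apply Rabs_triang|]. rewrite Rabs_Ropp.
  apply Rle_lt_trans with ((4 * C + 1) * (/ 2) ^ n0); [pose proof (pow_le (/ 2) n0 ltac:(lra)); nra|].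
  apply (Rmult_lt_compat_l (4 * C + 1)) in Hn0; [|lra].
  replace ((4 * C + 1) * (eps / (4 * C + 1))) with (pos eps) in Hn0 by (field; lra).
  exact Hn0.
Qed.

Lemma geometric_cauchy_lim n : Rabs (real (Lim_seq a) - a n) <= 2 * C * (/ 2) ^ n.
Proof.
  destruct geometric_ex_finite_lim as [l Hl]. rewrite (is_lim_seq_unique _ _ Hl). simpl.
  assert (Hshift : is_lim_seq (fun p => Rabs (a (p + n)%nat - a n)) (Rabs (l - a n))).
  { apply (is_lim_seq_abs _ (l - a n)). apply (is_lim_seq_minus _ _ l (a n)).
    - now apply is_lim_seq_incr_n.
    - apply is_lim_seq_const.
    - reflexivity. }
  exact (is_lim_seq_le _ _ _ _ (geometric_tail n) Hshift (is_lim_seq_const _)).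
Qed.

End GeometricLimit.

Lemma gronwall f df k T :
  (forall t, 0 <= t <= T -> continuity_pt f t) ->
  (forall t, 0 < t < T -> derivable_pt_lim f t (df t)) ->
  (forall t, 0 <= t <= T -> df t <= k * f t) ->
  forall t, 0 <= t <= T -> f t <= f 0 * exp (k * t).
Proof.
  intros Hc Hd Hdf t Ht.
  (* [f t * exp (- k t)] has a nonpositive derivative *)
  destruct (MVT_gen (fun x => f x * exp (- k * x)) 0 t
              (fun x => df x * exp (- k * x) + f x * (exp (- k * x) * (- k))))
    as [c [Hc0 Hmvt]]; rewrite Rmin_left, Rmax_right in * by lra.
  - intros x Hx. apply is_derive_Reals.
    apply (derivable_pt_lim_mult f (fun x => exp (- k * x))); [apply Hd; lra|].
    apply is_derive_Reals. auto_derive; [exact I|ring].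
  - intros x Hx. apply continuity_pt_mult; [apply Hc; lra|].
    apply derivable_continuous_pt. exists (exp (- k * x) * - k).
    apply is_derive_Reals. auto_derive; [exact I|ring].
  - assert (Hneg : (df c - k * f c) * exp (- k * c) * t <= 0).
    { pose proof (Hdf c ltac:(lra)). pose proof (exp_pos (- k * c)).
      assert (0 <= (k * f c - df c) * exp (- k * c)) by (apply Rmult_le_pos; lra). nra. }
    rewrite Rmult_0_r, exp_0, Rmult_1_r in Hmvt.
    assert (Hdec : f t * exp (- k * t) <= f 0) by nra.
    apply (Rmult_le_compat_r (exp (k * t))) in Hdec; [|left; apply exp_pos].
    rewrite Rmult_assoc, <- exp_plus in Hdec. replace (- k * t + k * t) with 0 in Hdec by ring.
    rewrite exp_0, Rmult_1_r in Hdec. exact Hdec.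
Qed.

(** * Picard iteration for a bounded, globally Lipschitz field *)

Section Picard.

Variable N : nat.
Variable F : (nat -> R) -> nat -> R.
Variables L B : R.
Hypothesis L_ge0 : 0 <= L.
Hypothesis B_ge0 : 0 <= B.
Hypothesis F_lipschitz : forall u v i, (i < N)%nat ->
  Rabs (F u i - F v i) <= L * sumN N (fun j => Rabs (u j - v j)).
Hypothesis F_bounded : forall u i, (i < N)%nat -> Rabs (F u i) <= B.
Variable u0 : nat -> R.

Lemma F_ext u v i : (i < N)%nat -> (forall j, (j < N)%nat -> u j = v j) -> F u i = F v i.
Proof.
  intros Hi Huv. pose proof (F_lipschitz u v i Hi) as H.
  rewrite (sumN_ext _ _ (fun _ => 0)), sumN_const, !Rmult_0_r in H
    by (intros j Hj; rewrite Huv, Rminus_diag, Rabs_R0 by exact Hj; reflexivity).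
  pose proof (Rabs_pos (F u i - F v i)).
  apply Rminus_diag_uniq, Rabs_eq_0. lra.
Qed.

(* Clamping the time at [0] extends solutions to the whole line. *)
Definition picard_integrand (v : nat -> R -> R) (i : nat) (tau : R) : R :=
  F (fun j => v j (Rmax 0 tau)) i.

Definition picard_map (v : nat -> R -> R) (i : nat) (t : R) : R :=
  u0 i + RInt (picard_integrand v i) 0 t.

Fixpoint picard_iter (n : nat) : nat -> R -> R :=
  match n with O => fun i _ => u0 i | S m => picard_map (picard_iter m) end.

Definition time_lipschitz (v : nat -> R -> R) : Prop :=
  forall j x y, (j < N)%nat -> 0 <= x -> 0 <= y -> Rabs (v j x - v j y) <= B * Rabs (x - y).

Lemma Rabs_Rmax0_minus x y : Rabs (Rmax 0 x - Rmax 0 y) <= Rabs (x - y).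
Proof. unfold Rmax; destruct (Rle_dec 0 x), (Rle_dec 0 y); unfold Rabs; repeat destruct Rcase_abs; lra. Qed.

Lemma picard_integrand_continuity v i x : time_lipschitz v -> (i < N)%nat ->
  continuity_pt (picard_integrand v i) x.
Proof.
  intros Hv Hi. apply (lipschitz_continuity_pt _ (L * (INR N * B))).
  { pose proof (pos_INR N). apply Rmult_le_pos; [|apply Rmult_le_pos]; assumption. }
  intros y z. eapply Rle_trans; [now apply F_lipschitz|].
  rewrite Rmult_assoc. apply Rmult_le_compat_l; [assumption|].
  rewrite Rmult_assoc, <- sumN_const. apply sumN_le. intros j Hj.
  eapply Rle_trans; [apply Hv; auto; apply Rmax_l|].
  apply Rmult_le_compat_l; [assumption|apply Rabs_Rmax0_minus].
Qed.

Lemma picard_map_time_lipschitz v : time_lipschitz v -> time_lipschitz (picard_map v).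
Proof.
  intros Hv j x y Hj _ _. unfold picard_map.
  rewrite Rminus_plus_l_l, RInt_minus_lower by (intros; now apply picard_integrand_continuity).
  apply abs_RInt_le_const_abs; [intros; now apply picard_integrand_continuity|].
  intros; apply F_bounded, Hj.
Qed.

Lemma picard_iter_time_lipschitz n : time_lipschitz (picard_iter n).
Proof.
  induction n as [|n IH]; [|now apply picard_map_time_lipschitz].
  intros j x y _ _ _. simpl. rewrite Rminus_diag, Rabs_R0.
  apply Rmult_le_pos; [assumption|apply Rabs_pos].
Qed.

Lemma picard_map_dist v w c k i t : time_lipschitz v -> time_lipschitz w ->
  0 < k -> 0 <= t -> (i < N)%nat ->
  (forall tau, 0 <= tau <= t -> sumN N (fun j => Rabs (v j tau - w j tau)) <= c * exp (k * tau)) ->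
  Rabs (picard_map v i t - picard_map w i t) <= L * c / k * (exp (k * t) - 1).
Proof.
  intros Hv Hw Hk Ht Hi Hvw. unfold picard_map.
  rewrite Rminus_plus_l_l, <- RInt_minus_continuity_pt by (intros; now apply picard_integrand_continuity).
  apply abs_RInt_le_exp; try assumption.
  - intros x. apply continuity_pt_minus; now apply picard_integrand_continuity.
  - intros x Hx. unfold picard_integrand. rewrite Rmax_right by lra.
    eapply Rle_trans; [now apply F_lipschitz|]. rewrite Rmult_assoc.
    apply Rmult_le_compat_l; [assumption|apply Hvw, Hx].
Qed.

Let rate := 2 * INR N * L + 1.

Lemma rate_ge1 : 1 <= rate.
Proof. unfold rate. pose proof (pos_INR N). pose proof (Rmult_le_pos _ _ H L_ge0). lra. Qed.

Lemma rate_contraction : INR N * L / rate <= / 2.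
Proof.
  pose proof rate_ge1. apply Rmult_le_reg_r with rate; [lra|].
  unfold Rdiv. rewrite Rmult_assoc, Rinv_l by lra. unfold rate. lra.
Qed.

Lemma picard_first_step t : 0 <= t ->
  sumN N (fun j => Rabs (picard_iter 1 j t - picard_iter 0 j t)) <= INR N * (B * t).
Proof.
  intros Ht. rewrite <- sumN_const. apply sumN_le. intros j Hj.
  cbn [picard_iter]. unfold picard_map. rewrite Rplus_minus_l.
  replace t with (Rabs (t - 0)) at 2 by (rewrite Rminus_0_r, Rabs_right; lra).
  apply abs_RInt_le_const_abs.
  - intros; apply picard_integrand_continuity; [apply (picard_iter_time_lipschitz 0)|exact Hj].
  - intros; now apply F_bounded.
Qed.

(* The Picard map is a [1/2]-contraction for the weighted norm [sup_t exp (- rate t) |v t|]. *)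
Lemma picard_iter_step n t : 0 <= t ->
  sumN N (fun j => Rabs (picard_iter (S n) j t - picard_iter n j t))
    <= INR N * B * exp (rate * t) * (/ 2) ^ n.
Proof.
  pose proof rate_ge1. pose proof (pos_INR N) as HN.
  revert t. induction n as [|n IH]; intros t Ht.
  - eapply Rle_trans; [apply picard_first_step, Ht|].
    cbn [pow]. rewrite Rmult_1_r, Rmult_assoc. apply Rmult_le_compat_l; [exact HN|].
    apply Rmult_le_compat_l; [exact B_ge0|].
    pose proof (exp_ineq1_le (rate * t)). nra.
  - set (c := INR N * B * (/ 2) ^ n).
    assert (Hc : 0 <= c) by (apply Rmult_le_pos; [apply Rmult_le_pos|apply pow_le]; lra).
    pose proof (exp_pos (rate * t)).
    apply Rle_trans with (sumN N (fun _ => L * c / rate * exp (rate * t))).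
    + apply sumN_le. intros j Hj. eapply Rle_trans.
      * apply (picard_map_dist (picard_iter (S n)) (picard_iter n) c rate);
          try apply picard_iter_time_lipschitz; try lra; [exact Hj|].
        intros tau Htau. eapply Rle_trans; [apply IH; lra|right; unfold c; ring].
      * assert (0 <= L * c / rate) by (apply Rdiv_le_0_compat; [apply Rmult_le_pos|]; lra). nra.
    + rewrite sumN_const.
      replace (INR N * (L * c / rate * exp (rate * t))) with (INR N * L / rate * (c * exp (rate * t)))
        by (field; lra).
      replace (INR N * B * exp (rate * t) * (/ 2) ^ S n) with (/ 2 * (c * exp (rate * t)))
        by (unfold c; simpl; ring).
      apply Rmult_le_compat_r; [apply Rmult_le_pos; lra|exact rate_contraction].
Qed.

Definition picard_lim (i : nat) (t : R) : R := real (Lim_seq (fun n => picard_iter n i t)).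

Lemma picard_lim_dist i t n : (i < N)%nat -> 0 <= t ->
  Rabs (picard_lim i t - picard_iter n i t) <= 2 * (INR N * B * exp (rate * t)) * (/ 2) ^ n.
Proof.
  intros Hi Ht. apply (geometric_cauchy_lim (fun n => picard_iter n i t)). intros m.
  eapply Rle_trans; [|apply picard_iter_step, Ht].
  apply (sumN_ge_term N (fun j => Rabs (picard_iter (S m) j t - picard_iter m j t))); [exact Hi|].
  intros; apply Rabs_pos.
Qed.

Lemma picard_lim_time_lipschitz : time_lipschitz picard_lim.
Proof.
  intros j x y Hj Hx Hy.
  cut (Rabs (picard_lim j x - picard_lim j y) - B * Rabs (x - y) <= 0); [lra|].
  apply (le_0_of_le_geom _ (2 * (INR N * B * exp (rate * x)) + 2 * (INR N * B * exp (rate * y)))).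
  intros n.
  pose proof (picard_lim_dist j x n Hj Hx). pose proof (picard_lim_dist j y n Hj Hy).
  pose proof (picard_iter_time_lipschitz n j x y Hj Hx Hy).
  replace (picard_lim j x - picard_lim j y) with
    ((picard_lim j x - picard_iter n j x) + (picard_iter n j x - picard_iter n j y)
     - (picard_lim j y - picard_iter n j y)) by ring.
  pose proof (Rabs_triang (picard_lim j x - picard_iter n j x) (picard_iter n j x - picard_iter n j y)).
  pose proof (Rabs_triang ((picard_lim j x - picard_iter n j x) + (picard_iter n j x - picard_iter n j y))
                (- (picard_lim j y - picard_iter n j y))).
  rewrite Rabs_Ropp in *. unfold Rminus at 2. lra.
Qed.

Lemma picard_lim_fixed i t : (i < N)%nat -> 0 <= t -> picard_map picard_lim i t = picard_lim i t.
Proof.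
  intros Hi Ht. pose proof rate_ge1. pose proof (pos_INR N) as HN.
  set (C := INR N * B * exp (rate * t)).
  assert (HC : 0 <= C) by (apply Rmult_le_pos; [apply Rmult_le_pos|left; apply exp_pos]; lra).
  apply Rminus_diag_uniq, Rabs_eq_0, Rle_antisym; [|apply Rabs_pos].
  apply (le_0_of_le_geom _ (L * (2 * INR N * C) / rate + 2 * C)). intros n.
  assert (Hmap : Rabs (picard_map picard_lim i t - picard_map (picard_iter n) i t)
                 <= L * (2 * INR N * C) / rate * (/ 2) ^ n).
  { eapply Rle_trans.
    - apply (picard_map_dist _ _ (2 * INR N * (INR N * B) * (/ 2) ^ n) rate);
        auto using picard_lim_time_lipschitz, picard_iter_time_lipschitz; [lra|].
      intros tau Htau.
      apply Rle_trans with (sumN N (fun _ => 2 * (INR N * B * exp (rate * tau)) * (/ 2) ^ n)).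
      + apply sumN_le. intros j Hj. apply picard_lim_dist; [exact Hj|lra].
      + rewrite sumN_const. right; ring.
    - assert (0 <= L * (2 * INR N * (INR N * B) * (/ 2) ^ n) / rate).
      { apply Rdiv_le_0_compat; [|lra]. apply Rmult_le_pos; [lra|].
        apply Rmult_le_pos; [|apply pow_le; lra]. apply Rmult_le_pos; [lra|]. apply Rmult_le_pos; lra. }
      unfold C. replace (L * (2 * INR N * (INR N * B * exp (rate * t))) / rate * (/ 2) ^ n)
        with (L * (2 * INR N * (INR N * B) * (/ 2) ^ n) / rate * exp (rate * t)) by (field; lra).
      nra. }
  assert (Hlim : Rabs (picard_iter (S n) i t - picard_lim i t) <= 2 * C * (/ 2) ^ n).
  { rewrite Rabs_minus_sym. eapply Rle_trans; [apply picard_lim_dist; [exact Hi|lra]|].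
    simpl pow. fold C. pose proof (pow_le (/ 2) n ltac:(lra)). nra. }
  replace (picard_map picard_lim i t - picard_lim i t) with
    ((picard_map picard_lim i t - picard_map (picard_iter n) i t)
     + (picard_iter (S n) i t - picard_lim i t)) by (simpl; ring).
  eapply Rle_trans; [apply Rabs_triang|]. lra.
Qed.

Definition picard_sol : nat -> R -> R := picard_map picard_lim.

Lemma picard_sol_init i : picard_sol i 0 = u0 i.
Proof. unfold picard_sol, picard_map. rewrite RInt_point. apply Rplus_0_r. Qed.

Lemma picard_sol_derivable i t : (i < N)%nat -> 0 <= t ->
  derivable_pt_lim (picard_sol i) t (F (fun j => picard_sol j t) i).
Proof.
  intros Hi Ht.
  pose proof (picard_integrand_continuity picard_lim i) as Hcont.
  replace (F (fun j => picard_sol j t) i) with (0 + picard_integrand picard_lim i t).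
  - apply derivable_pt_lim_plus; [apply derivable_pt_lim_const|].
    apply is_derive_Reals, (is_derive_RInt _ (fun b => RInt (picard_integrand picard_lim i) 0 b) 0 t).
    + apply filter_forall. intros b. apply (RInt_correct (V := R_CompleteNormedModule)).
      apply ex_RInt_continuity_pt. intros x. apply Hcont; auto using picard_lim_time_lipschitz.
    + apply continuity_pt_filterlim, Hcont; auto using picard_lim_time_lipschitz.
  - rewrite Rplus_0_l. unfold picard_integrand. rewrite Rmax_right by exact Ht.
    apply F_ext; [exact Hi|]. intros j Hj. symmetry. now apply picard_lim_fixed.
Qed.

End Picard.

(** * Energy estimates *)

Lemma energy_gronwall N (w dw : nat -> R -> R) c k T :
  (forall i t, (i < N)%nat -> 0 <= t <= T -> continuity_pt (w i) t) ->
  (forall i t, (i < N)%nat -> 0 < t < T -> derivable_pt_lim (w i) t (dw i t)) ->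
  (forall t, 0 <= t <= T ->
     2 * sumN N (fun i => w i t * dw i t) <= k * (c + sumN N (fun i => w i t ^ 2))) ->
  forall t, 0 <= t <= T ->
  c + sumN N (fun i => w i t ^ 2) <= (c + sumN N (fun i => w i 0 ^ 2)) * exp (k * t).
Proof.
  intros Hc Hd Hdw.
  apply (gronwall (fun t => c + sumN N (fun i => w i t ^ 2))
                  (fun t => 2 * sumN N (fun i => w i t * dw i t))).
  - intros t Ht. apply continuity_pt_plus; [apply continuity_pt_const; intros ? ?; reflexivity|].
    apply (continuity_pt_sumN N (fun i t => w i t ^ 2)). intros i Hi.
    apply (continuity_pt_mult (w i)); [apply Hc; auto|].
    apply (continuity_pt_mult (w i)); [apply Hc; auto|].
    apply continuity_pt_const; intros ? ?; reflexivity.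
  - intros t Ht. rewrite <- (Rplus_0_l (2 * _)), <- sumN_scal.
    apply derivable_pt_lim_plus; [apply derivable_pt_lim_const|].
    apply (derivable_pt_lim_sumN N (fun i t => w i t ^ 2) (fun i t => 2 * (w i t * dw i t))).
    intros i Hi.
    replace (2 * (w i t * dw i t)) with (INR 2 * w i t ^ (2 - 1) * dw i t) by (simpl; ring).
    apply (derivable_pt_lim_comp (w i) (fun x => x ^ 2));
      [apply Hd; auto|apply derivable_pt_lim_pow].
  - exact Hdw.
Qed.

Lemma sum_mul_le_growth N (u d : nat -> R) A B : 0 <= A -> 0 <= B ->
  (forall i, (i < N)%nat -> Rabs (d i) <= A + B * sumN N (fun j => Rabs (u j))) ->
  2 * sumN N (fun i => u i * d i)
    <= A * (INR N + sumN N (fun i => u i ^ 2)) + 2 * B * INR N * sumN N (fun i => u i ^ 2).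
Proof.
  intros HA HB Hd.
  set (S := sumN N (fun j => Rabs (u j))). set (Q := sumN N (fun i => u i ^ 2)).
  assert (HS : 0 <= S) by (apply sumN_nonneg; intros; apply Rabs_pos).
  assert (Hud : sumN N (fun i => u i * d i) <= (A + B * S) * S).
  { apply Rle_trans with (sumN N (fun j => (A + B * S) * Rabs (u j))).
    - apply sumN_le. intros i Hi.
      eapply Rle_trans; [apply Rle_abs|]. rewrite Rabs_mult, Rmult_comm.
      apply Rmult_le_compat_r; [apply Rabs_pos|now apply Hd].
    - rewrite sumN_scal. apply Rle_refl. }
  assert (H2S : 2 * S <= INR N + Q).
  { unfold S, Q. rewrite <- sumN_scal, <- (Rmult_1_r (INR N)), <- sumN_const, <- sumN_plus.
    apply sumN_le. intros j _. rewrite <- (pow2_abs (u j)).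
    pose proof (pow2_ge_0 (Rabs (u j) - 1)). nra. }
  assert (HSS : S ^ 2 <= INR N * Q).
  { unfold Q. rewrite (sumN_ext _ _ (fun i => Rabs (u i) ^ 2)) by (intros; apply eq_sym, pow2_abs).
    apply sumN_sq_le. }
  nra.
Qed.

Lemma linear_growth_bound N (u d : nat -> R -> R) A B T : 0 <= A -> 0 <= B ->
  (forall i t, (i < N)%nat -> 0 <= t <= T -> continuity_pt (u i) t) ->
  (forall i t, (i < N)%nat -> 0 < t < T -> derivable_pt_lim (u i) t (d i t)) ->
  (forall i t, (i < N)%nat -> 0 <= t <= T ->
     Rabs (d i t) <= A + B * sumN N (fun j => Rabs (u j t))) ->
  forall i t, (i < N)%nat -> 0 <= t <= T ->
  Rabs (u i t) <= (1 + sumN N (fun j => u j 0 ^ 2)) * exp ((A * (INR N + 1) + 2 * B * INR N) * t).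
Proof.
  intros HA HB Hc Hd Hgrowth i t Hi Ht. pose proof (pos_INR N).
  eapply Rle_trans; [|apply (energy_gronwall N u d 1 _ T Hc Hd); [|exact Ht]].
  - assert (u i t ^ 2 <= sumN N (fun j => u j t ^ 2))
      by (apply (sumN_ge_term N (fun j => u j t ^ 2)); [exact Hi|intros; apply pow2_ge_0]).
    rewrite <- (pow2_abs (u i t)) in *. pose proof (pow2_ge_0 (Rabs (u i t) - 1)). nra.
  - intros s Hs. eapply Rle_trans; [apply (sum_mul_le_growth N _ _ A B); auto|].
    cbv beta. set (Q := sumN N (fun j => u j s ^ 2)).
    assert (0 <= Q) by (apply sumN_nonneg; intros; apply pow2_ge_0).
    assert (0 <= A * (INR N * Q)) by (apply Rmult_le_pos; [|apply Rmult_le_pos]; lra).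
    assert (0 <= B * INR N) by (apply Rmult_le_pos; lra).
    nra.
Qed.

Lemma lipschitz_uniqueness N (G : (nat -> R) -> nat -> R) (u v : nat -> R -> R) T K L :
  0 <= L ->
  (forall w w' i, (i < N)%nat ->
     (forall j, (j < N)%nat -> Rabs (w j) <= K) -> (forall j, (j < N)%nat -> Rabs (w' j) <= K) ->
     Rabs (G w i - G w' i) <= L * sumN N (fun j => Rabs (w j - w' j))) ->
  (forall i t, (i < N)%nat -> 0 <= t <= T -> continuity_pt (u i) t) ->
  (forall i t, (i < N)%nat -> 0 <= t <= T -> continuity_pt (v i) t) ->
  (forall i t, (i < N)%nat -> 0 < t < T -> derivable_pt_lim (u i) t (G (fun j => u j t) i)) ->
  (forall i t, (i < N)%nat -> 0 < t < T -> derivable_pt_lim (v i) t (G (fun j => v j t) i)) ->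
  (forall j t, (j < N)%nat -> 0 <= t <= T -> Rabs (u j t) <= K) ->
  (forall j t, (j < N)%nat -> 0 <= t <= T -> Rabs (v j t) <= K) ->
  (forall j, (j < N)%nat -> u j 0 = v j 0) ->
  forall i t, (i < N)%nat -> 0 <= t <= T -> u i t = v i t.
Proof.
  intros HL HG Hcu Hcv Hdu Hdv Hbu Hbv H0 i t Hi Ht. pose proof (pos_INR N).
  set (w := fun j t => u j t - v j t).
  pose proof (energy_gronwall N w (fun j t => G (fun k => u k t) j - G (fun k => v k t) j)
                0 (2 * L * INR N) T) as Henergy.
  rewrite (sumN_ext _ (fun j => w j 0 ^ 2) (fun _ => 0)), sumN_const in Henergy
    by (intros j Hj; unfold w; rewrite H0 by exact Hj; ring).
  assert (Hw : 0 + sumN N (fun j => w j t ^ 2) <= (0 + INR N * 0) * exp (2 * L * INR N * t)).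
  { apply Henergy; [| | |exact Ht].
    - intros j s Hj Hs. apply continuity_pt_minus; auto.
    - intros j s Hj Hs. apply derivable_pt_lim_minus; auto.
    - intros s Hs. rewrite Rplus_0_l.
      eapply Rle_trans; [apply (sum_mul_le_growth N _ _ 0 L); try lra|].
      + intros j Hj. rewrite Rplus_0_l. apply HG; auto.
      + right; ring. }
  replace ((0 + INR N * 0) * exp (2 * L * INR N * t)) with 0 in Hw by ring.
  assert (w i t ^ 2 <= sumN N (fun j => w j t ^ 2))
    by (apply (sumN_ge_term N (fun j => w j t ^ 2)); [exact Hi|intros; apply pow2_ge_0]).
  unfold w in *. nra.
Qed.

(** * Global solutions by truncation *)

Definition clip (K v : R) : R := Rmax (- K) (Rmin K v).

Lemma Rabs_clip_le K v : 0 <= K -> Rabs (clip K v) <= K.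
Proof. intros. unfold clip, Rmax, Rmin. repeat destruct Rle_dec; unfold Rabs; destruct Rcase_abs; lra. Qed.

Lemma Rabs_clip_le_Rabs K v : 0 <= K -> Rabs (clip K v) <= Rabs v.
Proof. intros. unfold clip, Rmax, Rmin. repeat destruct Rle_dec; unfold Rabs; repeat destruct Rcase_abs; lra.
Qed.

Lemma clip_lipschitz K a b : 0 <= K -> Rabs (clip K a - clip K b) <= Rabs (a - b).
Proof. intros. unfold clip, Rmax, Rmin. repeat destruct Rle_dec; unfold Rabs; repeat destruct Rcase_abs; lra.
Qed.

Lemma clip_id K v : Rabs v <= K -> clip K v = v.
Proof.
  intros. unfold clip, Rmax, Rmin. repeat destruct Rle_dec; unfold Rabs in *; repeat destruct Rcase_abs; lra.
Qed.

Definition ceil_nat (t : R) : nat := Z.to_nat (up t).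

Lemma le_ceil_nat t : 0 <= t -> t <= INR (ceil_nat t).
Proof.
  intros Ht. unfold ceil_nat. destruct (archimed t) as [Hup _].
  assert (Hz : (0 < up t)%Z) by (apply lt_0_IZR; lra).
  rewrite INR_IZR_INZ, Z2Nat.id by lia. lra.
Qed.

Section GlobalSolution.

Variable N : nat.
Variable G : (nat -> R) -> nat -> R.
Variables A B : R.
Variable Lip : R -> R.
Hypothesis A_ge0 : 0 <= A.
Hypothesis B_ge0 : 0 <= B.
Hypothesis G_growth : forall u i, (i < N)%nat ->
  Rabs (G u i) <= A + B * sumN N (fun j => Rabs (u j)).
Hypothesis Lip_ge0 : forall K, 0 <= K -> 0 <= Lip K.
Hypothesis G_locally_lipschitz : forall K w w' i, (i < N)%nat ->
  (forall j, (j < N)%nat -> Rabs (w j) <= K) -> (forall j, (j < N)%nat -> Rabs (w' j) <= K) ->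
  Rabs (G w i - G w' i) <= Lip K * sumN N (fun j => Rabs (w j - w' j)).
Variable u0 : nat -> R.

Lemma G_ext u v i : (i < N)%nat -> (forall j, (j < N)%nat -> u j = v j) -> G u i = G v i.
Proof.
  intros Hi Huv. set (K := sumN N (fun j => Rabs (u j))).
  assert (Hbox : forall j, (j < N)%nat -> Rabs (u j) <= K)
    by (intros j Hj; apply (sumN_ge_term N (fun j => Rabs (u j))); [exact Hj|intros; apply Rabs_pos]).
  pose proof (G_locally_lipschitz K u v i Hi Hbox ltac:(intros j Hj; rewrite <- Huv; auto)) as H.
  rewrite (sumN_ext _ _ (fun _ => 0)), sumN_const, !Rmult_0_r in H
    by (intros j Hj; rewrite Huv, Rminus_diag, Rabs_R0 by exact Hj; reflexivity).
  pose proof (Rabs_pos (G u i - G v i)).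
  apply Rminus_diag_uniq, Rabs_eq_0. lra.
Qed.

Definition solves_on (T : R) (u : nat -> R -> R) : Prop :=
  (forall i t, (i < N)%nat -> 0 <= t <= T -> continuity_pt (u i) t) /\
  (forall i t, (i < N)%nat -> 0 < t < T -> derivable_pt_lim (u i) t (G (fun j => u j t) i)) /\
  (forall i, (i < N)%nat -> u i 0 = u0 i).

Lemma solves_on_le T T' u : T' <= T -> solves_on T u -> solves_on T' u.
Proof.
  intros HT (Hc & Hd & H0).
  split; [|split]; [intros; apply Hc; auto; lra|intros; apply Hd; auto; lra|exact H0].
Qed.

Definition envelope (t : R) : R :=
  (1 + sumN N (fun j => u0 j ^ 2)) * exp ((A * (INR N + 1) + 2 * B * INR N) * t).

Lemma envelope_pos t : 0 < envelope t.
Proof.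
  apply Rmult_lt_0_compat; [|apply exp_pos].
  assert (0 <= sumN N (fun j => u0 j ^ 2)) by (apply sumN_nonneg; intros; apply pow2_ge_0). lra.
Qed.

Lemma envelope_le t t' : t <= t' -> envelope t <= envelope t'.
Proof.
  intros Htt'. pose proof (pos_INR N).
  apply Rmult_le_compat_l.
  - assert (0 <= sumN N (fun j => u0 j ^ 2)) by (apply sumN_nonneg; intros; apply pow2_ge_0). lra.
  - apply exp_le_compat, Rmult_le_compat_l; [|exact Htt'].
    assert (0 <= A * (INR N + 1)) by (apply Rmult_le_pos; lra).
    assert (0 <= B * INR N) by (apply Rmult_le_pos; lra). lra.
Qed.

Lemma solves_on_bound T u : solves_on T u ->
  forall i t, (i < N)%nat -> 0 <= t <= T -> Rabs (u i t) <= envelope t.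
Proof.
  intros (Hc & Hd & H0) i t Hi Ht. unfold envelope.
  rewrite <- (sumN_ext _ (fun j => u j 0 ^ 2)) by (intros j Hj; rewrite H0 by exact Hj; reflexivity).
  apply (linear_growth_bound N u (fun i t => G (fun j => u j t) i) A B T); auto.
Qed.

Lemma solves_on_unique T u v : solves_on T u -> solves_on T v ->
  forall i t, (i < N)%nat -> 0 <= t <= T -> u i t = v i t.
Proof.
  intros Hu Hv i t Hi Ht.
  pose proof (solves_on_bound T u Hu) as Bu. pose proof (solves_on_bound T v Hv) as Bv.
  destruct Hu as (Hcu & Hdu & H0u), Hv as (Hcv & Hdv & H0v).
  pose proof (envelope_pos T).
  apply (lipschitz_uniqueness N G u v T (envelope T) (Lip (envelope T))); try assumption.
  - apply Lip_ge0; lra.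
  - intros w w' k Hk Hw Hw'. now apply G_locally_lipschitz.
  - intros j s Hj Hs. eapply Rle_trans; [apply Bu; auto|apply envelope_le; lra].
  - intros j s Hj Hs. eapply Rle_trans; [apply Bv; auto|apply envelope_le; lra].
  - intros j Hj. rewrite H0u, H0v; auto.
Qed.

Definition truncated (K : R) (u : nat -> R) (i : nat) : R := G (fun j => clip K (u j)) i.

Lemma truncated_lipschitz K u v i : 0 <= K -> (i < N)%nat ->
  Rabs (truncated K u i - truncated K v i) <= Lip K * sumN N (fun j => Rabs (u j - v j)).
Proof.
  intros HK Hi. eapply Rle_trans.
  - apply G_locally_lipschitz; [exact Hi|intros; now apply Rabs_clip_le..].
  - apply Rmult_le_compat_l; [now apply Lip_ge0|]. apply sumN_le. intros; now apply clip_lipschitz.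
Qed.

Lemma truncated_bounded K u i : 0 <= K -> (i < N)%nat ->
  Rabs (truncated K u i) <= A + B * (INR N * K).
Proof.
  intros HK Hi. eapply Rle_trans; [now apply G_growth|].
  apply Rplus_le_compat_l, Rmult_le_compat_l; [exact B_ge0|].
  rewrite <- sumN_const. apply sumN_le. intros; now apply Rabs_clip_le.
Qed.

Lemma truncated_growth K u i : 0 <= K -> (i < N)%nat ->
  Rabs (truncated K u i) <= A + B * sumN N (fun j => Rabs (u j)).
Proof.
  intros HK Hi. eapply Rle_trans; [now apply G_growth|].
  apply Rplus_le_compat_l, Rmult_le_compat_l; [exact B_ge0|].
  apply sumN_le. intros; now apply Rabs_clip_le_Rabs.
Qed.

(* Up to time [n] the envelope keeps the solution inside the truncation box. *)
Definition trunc_sol (n : nat) : nat -> R -> R := picard_sol (truncated (envelope (INR n))) u0.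

Lemma trunc_sol_derivable_truncated n i t : (i < N)%nat -> 0 <= t ->
  derivable_pt_lim (trunc_sol n i) t (truncated (envelope (INR n)) (fun j => trunc_sol n j t) i).
Proof.
  intros Hi Ht. pose proof (envelope_pos (INR n)). pose proof (pos_INR N).
  apply (picard_sol_derivable N _ (Lip (envelope (INR n))) (A + B * (INR N * envelope (INR n))));
    [apply Lip_ge0; lra| |intros u v k Hk; apply truncated_lipschitz; [lra|exact Hk]
    |intros u k Hk; apply truncated_bounded; [lra|exact Hk]|exact Hi|exact Ht].
  assert (0 <= B * (INR N * envelope (INR n))) by (apply Rmult_le_pos; [|apply Rmult_le_pos]; lra). lra.
Qed.

Lemma trunc_sol_bound n i t : (i < N)%nat -> 0 <= t -> Rabs (trunc_sol n i t) <= envelope t.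
Proof.
  intros Hi Ht. unfold envelope.
  rewrite <- (sumN_ext _ (fun j => trunc_sol n j 0 ^ 2))
    by (intros j Hj; unfold trunc_sol; rewrite picard_sol_init; reflexivity).
  apply (linear_growth_bound N (trunc_sol n)
           (fun i t => truncated (envelope (INR n)) (fun j => trunc_sol n j t) i) A B t);
    [exact A_ge0|exact B_ge0| | | |exact Hi|lra].
  - intros k s Hk Hs. apply derivable_continuous_pt.
    eexists. apply trunc_sol_derivable_truncated; [exact Hk|lra].
  - intros k s Hk Hs. apply trunc_sol_derivable_truncated; [exact Hk|lra].
  - intros k s Hk Hs. apply truncated_growth; [left; apply envelope_pos|exact Hk].
Qed.

Lemma trunc_sol_derivable n i t : (i < N)%nat -> 0 <= t <= INR n ->
  derivable_pt_lim (trunc_sol n i) t (G (fun j => trunc_sol n j t) i).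
Proof.
  intros Hi Ht. replace (G _ i) with (truncated (envelope (INR n)) (fun j => trunc_sol n j t) i).
  - apply trunc_sol_derivable_truncated; [exact Hi|lra].
  - apply G_ext; [exact Hi|]. intros j Hj. apply clip_id.
    eapply Rle_trans; [apply trunc_sol_bound; [exact Hj|lra]|apply envelope_le; lra].
Qed.

Lemma trunc_sol_solves n : solves_on (INR n) (trunc_sol n).
Proof.
  split; [|split].
  - intros i t Hi Ht. apply derivable_continuous_pt. eexists. now apply trunc_sol_derivable.
  - intros i t Hi Ht. apply trunc_sol_derivable; [exact Hi|lra].
  - intros i Hi. apply picard_sol_init.
Qed.

Definition global_sol (i : nat) (t : R) : R := trunc_sol (ceil_nat t) i t.

Lemma global_sol_eq m i t : (i < N)%nat -> 0 <= t <= INR m -> global_sol i t = trunc_sol m i t.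
Proof.
  intros Hi Ht. pose proof (le_ceil_nat t (proj1 Ht)).
  unfold global_sol.
  apply (solves_on_unique (Rmin (INR (ceil_nat t)) (INR m)) (trunc_sol (ceil_nat t)) (trunc_sol m));
    [| |exact Hi|].
  - apply (solves_on_le (INR (ceil_nat t))); [apply Rmin_l|apply trunc_sol_solves].
  - apply (solves_on_le (INR m)); [apply Rmin_r|apply trunc_sol_solves].
  - split; [lra|]. apply Rmin_glb; lra.
Qed.

Lemma solves_on_global_sol T u : 0 <= T -> solves_on T u ->
  forall i t, (i < N)%nat -> 0 <= t <= T -> u i t = global_sol i t.
Proof.
  intros HT Hu i t Hi Ht. pose proof (le_ceil_nat T HT).
  rewrite (global_sol_eq (ceil_nat T)) by (assumption || lra).
  apply (solves_on_unique T u (trunc_sol (ceil_nat T))); [exact Hu| |exact Hi|exact Ht].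
  apply (solves_on_le (INR (ceil_nat T))); [lra|apply trunc_sol_solves].
Qed.

End GlobalSolution.

Lemma global_sol_init N G A B u0 i : global_sol N G A B u0 i 0 = u0 i.
Proof. apply picard_sol_init. Qed.

(** * Right derivatives on [[0, +oo)] *)

Lemma has_deriv_Rplus_eps f t l : has_deriv_Rplus f t l ->
  forall eps, 0 < eps -> exists delta, 0 < delta /\
  forall u, 0 <= u -> u <> t -> Rabs (u - t) < delta -> Rabs ((f u - f t) / (u - t) - l) < eps.
Proof.
  intros H eps Heps. unfold has_deriv_Rplus in H. rewrite filterlim_locally in H.
  destruct (H (mkposreal eps Heps)) as [delta Hd].
  exists delta. split; [apply cond_pos|]. intros u Hu Hut Hdist. exact (Hd u Hdist (conj Hu Hut)).
Qed.

Lemma has_deriv_Rplus_derivable f t l : 0 < t -> has_deriv_Rplus f t l -> derivable_pt_lim f t l.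
Proof.
  intros Ht H eps Heps. destruct (has_deriv_Rplus_eps f t l H eps Heps) as [delta [Hd Hq]].
  exists (mkposreal _ (Rmin_pos _ _ Hd Ht)). intros h Hh0 Hh. simpl in Hh.
  pose proof (Rmin_l delta t). pose proof (Rmin_r delta t).
  specialize (Hq (t + h)). replace (t + h - t) with h in Hq by ring.
  apply Hq; [|lra|lra]. pose proof (Rle_abs (- h)). rewrite Rabs_Ropp in *. lra.
Qed.

Lemma has_deriv_Rplus_continuous f t l : has_deriv_Rplus f t l ->
  forall eps, 0 < eps -> exists delta, 0 < delta /\
  forall u, 0 <= u -> Rabs (u - t) < delta -> Rabs (f u - f t) < eps.
Proof.
  intros H eps Heps. destruct (has_deriv_Rplus_eps f t l H 1 ltac:(lra)) as [d [Hd Hq]].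
  set (M := Rabs l + 1). assert (HM : 0 < M) by (pose proof (Rabs_pos l); unfold M; lra).
  exists (Rmin d (eps / M)). split; [apply Rmin_pos; [lra|apply Rdiv_lt_0_compat; lra]|].
  intros u Hu Hdist. pose proof (Rmin_l d (eps / M)). pose proof (Rmin_r d (eps / M)) as Hdeps.
  destruct (Req_dec u t) as [->|Hut]; [rewrite Rminus_diag, Rabs_R0; lra|].
  assert (Hquot : Rabs ((f u - f t) / (u - t)) < M).
  { specialize (Hq u Hu Hut ltac:(lra)).
    replace ((f u - f t) / (u - t)) with (((f u - f t) / (u - t) - l) + l) by ring.
    eapply Rle_lt_trans; [apply Rabs_triang|unfold M; lra]. }
  replace (f u - f t) with ((f u - f t) / (u - t) * (u - t)) by (field; lra).
  rewrite Rabs_mult.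
  apply Rle_lt_trans with (M * Rabs (u - t)); [apply Rmult_le_compat_r; [apply Rabs_pos|lra]|].
  apply Rmult_lt_reg_r with (/ M); [apply Rinv_0_lt_compat; lra|].
  replace (M * Rabs (u - t) * / M) with (Rabs (u - t)) by (field; lra).
  exact (Rlt_le_trans _ _ _ Hdist Hdeps).
Qed.

Lemma has_deriv_Rplus_continuity_pt_Rmax0 f t l : 0 <= t -> has_deriv_Rplus f t l ->
  continuity_pt (fun tau => f (Rmax 0 tau)) t.
Proof.
  intros Ht H eps Heps. destruct (has_deriv_Rplus_continuous f t l H eps Heps) as [d [Hd Hc]].
  exists d. split; [exact Hd|]. intros u [_ Hu]. simpl in *. unfold R_dist in *.
  rewrite (Rmax_right 0 t) by exact Ht. apply Hc; [apply Rmax_l|].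
  eapply Rle_lt_trans; [|exact Hu].
  unfold Rmax; destruct Rle_dec; unfold Rabs; repeat destruct Rcase_abs; lra.
Qed.

Lemma derivable_has_deriv_Rplus f g t l : 0 <= t -> derivable_pt_lim g t l ->
  (forall u, 0 <= u < t + 1 -> f u = g u) -> has_deriv_Rplus f t l.
Proof.
  intros Ht Hg Hfg. unfold has_deriv_Rplus. apply filterlim_locally. intros eps.
  destruct (Hg eps (cond_pos eps)) as [delta Hd].
  exists (mkposreal _ (Rmin_pos delta 1 (cond_pos delta) ltac:(lra))).
  intros u Hu [Hu0 Hut]. change (Rabs (u - t) < Rmin delta 1) in Hu.
  change (Rabs ((f u - f t) / (u - t) - l) < eps).
  pose proof (Rmin_l delta 1). pose proof (Rmin_r delta 1). pose proof (Rle_abs (u - t)).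
  rewrite (Hfg u), (Hfg t) by lra.
  specialize (Hd (u - t) ltac:(lra) ltac:(lra)). rewrite Rplus_minus in Hd. exact Hd.
Qed.

Lemma continuous_induction (P : R -> Prop) T : 0 <= T ->
  (forall t, 0 <= t <= T -> (forall tau, 0 <= tau < t -> P tau) -> P t) ->
  (forall t, 0 <= t < T -> (forall tau, 0 <= tau <= t -> P tau) ->
     exists e, 0 < e /\ forall tau, t < tau < t + e -> P tau) ->
  forall t, 0 <= t <= T -> P t.
Proof.
  intros HT Hclosed Hopen.
  set (E := fun t => 0 <= t <= T /\ forall tau, 0 <= tau <= t -> P tau).
  assert (HE0 : E 0).
  { split; [lra|]. intros tau Htau. replace tau with 0 by lra. apply Hclosed; [lra|intros; lra]. }
  destruct (completeness E) as [sup [Hub Hleast]];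
    [exists T; intros t [Ht _]; lra|exists 0; exact HE0|].
  assert (Hsup : 0 <= sup <= T) by (split; [apply Hub, HE0|apply Hleast; intros t [Ht _]; lra]).
  assert (Hbelow : forall tau, 0 <= tau < sup -> P tau).
  { intros tau Htau. apply NNPP. intros HnP.
    assert (sup <= tau); [|lra]. apply Hleast. intros t [Ht HPt].
    destruct (Rle_lt_dec t tau) as [|Hlt]; [assumption|exfalso].
    apply HnP, HPt. lra. }
  assert (HPsup : forall tau, 0 <= tau <= sup -> P tau).
  { intros tau Htau. destruct (Req_dec tau sup) as [->|]; [apply Hclosed; auto; lra|apply Hbelow; lra]. }
  assert (Hsup_T : sup = T).
  { destruct (Req_dec sup T) as [|Hne]; [assumption|exfalso].
    destruct (Hopen sup ltac:(lra) HPsup) as [e [He HPe]].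
    assert (Hlt : sup < Rmin (sup + e / 2) T) by (apply Rmin_glb_lt; lra).
    assert (E (Rmin (sup + e / 2) T)).
    { pose proof (Rmin_l (sup + e / 2) T). pose proof (Rmin_r (sup + e / 2) T).
      split; [lra|]. intros tau Htau.
      destruct (Rle_lt_dec tau sup); [apply HPsup; lra|apply HPe; lra]. }
    assert (Rmin (sup + e / 2) T <= sup) by now apply Hub.
    lra. }
  intros t Ht. apply HPsup. lra.
Qed.

Lemma exists_common_radius n (P : nat -> R -> Prop) :
  (forall i e e', P i e -> 0 < e' <= e -> P i e') ->
  (forall i, (i < n)%nat -> exists e, 0 < e /\ P i e) ->
  exists e, 0 < e /\ forall i, (i < n)%nat -> P i e.
Proof.
  intros Hmono. induction n as [|n IH]; intros H.
  - exists 1. split; [lra|intros; lia].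
  - destruct IH as [e1 [He1 H1]]; [intros; apply H; lia|].
    destruct (H n ltac:(lia)) as [e2 [He2 H2]].
    exists (Rmin e1 e2). split; [now apply Rmin_pos|].
    pose proof (Rmin_l e1 e2). pose proof (Rmin_r e1 e2). pose proof (Rmin_pos e1 e2 He1 He2).
    intros i Hi. destruct (Nat.eq_dec i n) as [->|Hin].
    + apply (Hmono n e2); [exact H2|lra].
    + apply (Hmono i e1); [apply H1; lia|lra].
Qed.

Lemma has_deriv_Rplus_ge_left f t l c : 0 < t -> has_deriv_Rplus f t l ->
  (forall u, 0 <= u < t -> c <= f u) -> c <= f t.
Proof.
  intros Ht H Hc. destruct (Rle_lt_dec c (f t)) as [|Hlt]; [assumption|exfalso].
  destruct (has_deriv_Rplus_continuous f t l H (c - f t) ltac:(lra)) as [d [Hd Hu]].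
  set (u := Rmax 0 (t - d / 2)).
  assert (Hu0 : 0 <= u) by apply Rmax_l.
  assert (Hut : t - d / 2 <= u < t) by (split; [apply Rmax_r|apply Rmax_lub_lt; lra]).
  specialize (Hu u Hu0 ltac:(rewrite Rabs_left; lra)). specialize (Hc u ltac:(lra)).
  pose proof (Rle_abs (f u - f t)). lra.
Qed.

Lemma has_deriv_Rplus_pos_right f t l : 0 <= t -> has_deriv_Rplus f t l -> 0 < f t ->
  exists e, 0 < e /\ forall u, t < u < t + e -> 0 < f u.
Proof.
  intros Ht H Hpos. destruct (has_deriv_Rplus_continuous f t l H (f t) Hpos) as [d [Hd Hu]].
  exists d. split; [exact Hd|]. intros u Hut.
  specialize (Hu u ltac:(lra) ltac:(rewrite Rabs_right; lra)).
  pose proof (Rle_abs (- (f u - f t))). rewrite Rabs_Ropp in *. lra.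
Qed.

(** * The model *)

Lemma tanh_logistic x : tanh x = 1 - 2 / (exp (2 * x) + 1).
Proof.
  unfold tanh, sinh, cosh. pose proof (exp_pos x).
  replace (2 * x) with (x + x) by ring. rewrite exp_plus, exp_Ropp.
  field. split; [nra|lra].
Qed.

Lemma Rabs_tanh_le_1 x : Rabs (tanh x) <= 1.
Proof.
  rewrite tanh_logistic. pose proof (exp_pos (2 * x)).
  assert (0 < 2 / (exp (2 * x) + 1) < 2).
  { split; [apply Rdiv_lt_0_compat; lra|].
    apply Rmult_lt_reg_r with (exp (2 * x) + 1); [lra|].
    unfold Rdiv. rewrite Rmult_assoc, Rinv_l by lra. lra. }
  apply Rabs_le. lra.
Qed.

Lemma tanh_lipschitz a b : Rabs (tanh a - tanh b) <= Rabs (a - b).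
Proof.
  set (g := fun x => 1 - 2 / (exp (2 * x) + 1)).
  set (dg := fun x => 4 * exp (2 * x) / (exp (2 * x) + 1) ^ 2).
  assert (Hd : forall x, is_derive g x (dg x)).
  { intros x. unfold g, dg. pose proof (exp_pos (2 * x)). auto_derive; [lra|field; lra]. }
  assert (Hdg : forall x, Rabs (dg x) <= 1).
  { intros x. unfold dg. set (E := exp (2 * x)). assert (HE : 0 < E) by apply exp_pos.
    rewrite Rabs_right by (apply Rle_ge, Rdiv_le_0_compat; [lra|apply pow_lt; lra]).
    apply (proj1 (Rdiv_le_1 (4 * E) ((E + 1) ^ 2) ltac:(apply pow_lt; lra))).
    replace ((E + 1) ^ 2) with ((E - 1) ^ 2 + 4 * E) by ring.
    pose proof (pow2_ge_0 (E - 1)). lra. }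
  rewrite !tanh_logistic. fold (g a) (g b).
  destruct (MVT_gen g b a dg) as [c [_ Hc]].
  - intros; apply Hd.
  - intros x _. apply derivable_continuous_pt. exists (dg x). apply is_derive_Reals, Hd.
  - rewrite Hc, Rabs_mult. rewrite <- (Rmult_1_l (Rabs (a - b))) at 2.
    apply Rmult_le_compat_r; [apply Rabs_pos|apply Hdg].
Qed.

Lemma sum_ne_sumN N i f : (1 <= N)%nat ->
  sum_ne N i f = sumN N (fun j => if Nat.eq_dec j i then 0 else f j).
Proof. intros H. unfold sum_ne. rewrite sum_f_R0_sumN. f_equal. lia. Qed.

Lemma sum_ne_ext N i f g : (1 <= N)%nat -> (forall j, (j < N)%nat -> f j = g j) ->
  sum_ne N i f = sum_ne N i g.
Proof.
  intros HN H. rewrite !sum_ne_sumN by exact HN.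
  apply sumN_ext. intros j Hj. destruct Nat.eq_dec; [reflexivity|now apply H].
Qed.

Lemma Rabs_sum_ne_le N i f g : (1 <= N)%nat -> (forall j, (j < N)%nat -> Rabs (f j) <= g j) ->
  Rabs (sum_ne N i f) <= sumN N g.
Proof.
  intros HN H. rewrite sum_ne_sumN by exact HN. eapply Rle_trans; [apply sumN_abs|].
  apply sumN_le. intros j Hj. destruct Nat.eq_dec.
  - rewrite Rabs_R0. eapply Rle_trans; [apply Rabs_pos|apply H, Hj].
  - now apply H.
Qed.

Lemma sum_ne_minus N i f g : sum_ne N i f - sum_ne N i g = sum_ne N i (fun j => f j - g j).
Proof. unfold sum_ne. rewrite <- minus_sum. apply sum_eq. intros j _. destruct Nat.eq_dec; ring. Qed.

Lemma one_plus_tanh_bounds z : 0 <= 1 + tanh z <= 2.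
Proof. pose proof (Rabs_tanh_le_1 z) as H. apply Rabs_le_between in H. lra. Qed.

Lemma Rabs_kernel_term_le a c z : 0 <= c -> Rabs (a * c * (1 + tanh z)) <= 2 * c * Rabs a.
Proof.
  intros Hc. pose proof (one_plus_tanh_bounds z).
  rewrite !Rabs_mult, (Rabs_right c), (Rabs_right (1 + tanh z)) by lra.
  replace (2 * c * Rabs a) with (Rabs a * c * 2) by ring.
  apply Rmult_le_compat_l; [apply Rmult_le_pos; [apply Rabs_pos|lra]|lra].
Qed.

Lemma kernel_term_lipschitz a b a' b' c s K : 0 <= c -> 0 < s -> Rabs a' <= K ->
  Rabs (a * c * (1 + tanh (s * (a - b))) - a' * c * (1 + tanh (s * (a' - b'))))
    <= c * (2 * Rabs (a - a') + K * s * (Rabs (a - a') + Rabs (b - b'))).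
Proof.
  intros Hc Hs Ha'. pose proof (one_plus_tanh_bounds (s * (a - b))).
  replace (a * c * (1 + tanh (s * (a - b))) - a' * c * (1 + tanh (s * (a' - b')))) with
    (c * ((a - a') * (1 + tanh (s * (a - b))) + a' * (tanh (s * (a - b)) - tanh (s * (a' - b')))))
    by ring.
  rewrite Rabs_mult, (Rabs_right c) by lra. apply Rmult_le_compat_l; [exact Hc|].
  eapply Rle_trans; [apply Rabs_triang|]. rewrite !Rabs_mult, (Rabs_right (1 + tanh _)) by lra.
  apply Rplus_le_compat.
  - pose proof (Rabs_pos (a - a')). nra.
  - assert (Htanh : Rabs (tanh (s * (a - b)) - tanh (s * (a' - b'))) <= s * (Rabs (a - a') + Rabs (b - b'))).
    { eapply Rle_trans; [apply tanh_lipschitz|].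
      replace (s * (a - b) - s * (a' - b')) with (s * ((a - a') - (b - b'))) by ring.
      rewrite Rabs_mult, (Rabs_right s) by lra. apply Rmult_le_compat_l; [lra|].
      unfold Rminus at 1. eapply Rle_trans; [apply Rabs_triang|]. rewrite Rabs_Ropp. lra. }
    rewrite Rmult_assoc. apply Rmult_le_compat; [apply Rabs_pos|apply Rabs_pos|exact Ha'|exact Htanh].
Qed.

Section Model.

Variable N : nat.
Variables sm sx sr RM : R.
Variables x y Sc gam s0 : nat -> R.
Hypothesis N_ge2 : (2 <= N)%nat.
Hypothesis sm_pos : 0 < sm.
Hypothesis sx_pos : 0 < sx.
Hypothesis sr_pos : 0 < sr.
Hypothesis RM_pos : 0 < RM.
Hypothesis s0_pos : forall i, (i < N)%nat -> 0 < s0 i.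
Hypothesis gam_pos : forall i, (i < N)%nat -> 0 < gam i.

Definition weight (i j : nat) : R := / (2 * RM * (1 + dist2 (x i) (y i) (x j) (y j) ^ 2 / sx ^ 2)).

Definition interaction (u : nat -> R) (i : nat) : R :=
  / INR (N - 1) * sum_ne N i (fun j => u j * weight i j * (1 + tanh (/ sr * (u j - u i)))).

(* The system in the variables [u_i = ln (s_i / sm)]. *)
Definition log_rhs (u : nat -> R) (i : nat) : R :=
  gam i * (ln (Sc i / sm) * (1 - interaction u i) - u i).

Lemma rhs_log_change s u i : (i < N)%nat -> (forall j, (j < N)%nat -> s j = sm * exp (u j)) ->
  rhs N sm sx sr RM x y Sc gam s i = s i * log_rhs u i.
Proof.
  intros Hi Hs.
  assert (Hln : forall a, ln (sm * exp a / sm) = a)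
    by (intros a; replace (sm * exp a / sm) with (exp a) by (field; lra); apply ln_exp).
  assert (Hratio : forall a b, ln (sm * exp a / (sm * exp b)) = a - b).
  { intros a b. rewrite <- ln_exp. f_equal. unfold Rminus. rewrite exp_plus, exp_Ropp.
    field. split; [apply Rgt_not_eq, exp_pos|lra]. }
  unfold rhs, log_rhs, interaction.
  replace (sum_ne N i _) with (sum_ne N i (fun j => u j * weight i j * (1 + tanh (/ sr * (u j - u i))))).
  - rewrite Hs, Hln by exact Hi. ring.
  - apply sum_ne_ext; [lia|]. intros j Hj. unfold Ckernel, weight.
    rewrite (Hs i Hi), (Hs j Hj), Hln, Hratio. unfold Rdiv. ring.
Qed.

Lemma weight_bounds i j : 0 <= weight i j <= / (2 * RM).
Proof.
  unfold weight. assert (0 <= dist2 (x i) (y i) (x j) (y j) ^ 2 / sx ^ 2)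
    by (apply Rdiv_le_0_compat; [apply pow2_ge_0|apply pow_lt; lra]).
  split; [left; apply Rinv_0_lt_compat; nra|].
  apply Rinv_le_contravar; [lra|nra].
Qed.

Lemma inv_pred_N_bounds : 0 < / INR (N - 1) <= 1.
Proof.
  assert (H1 : 1 <= INR (N - 1)) by (rewrite <- INR_1; apply le_INR; lia).
  split; [apply Rinv_0_lt_compat; lra|]. rewrite <- Rinv_1. apply Rinv_le_contravar; lra.
Qed.

Lemma Rabs_interaction_le u i : Rabs (interaction u i) <= / RM * sumN N (fun j => Rabs (u j)).
Proof.
  unfold interaction. pose proof inv_pred_N_bounds.
  rewrite Rabs_mult, (Rabs_right (/ INR (N - 1))) by lra.
  rewrite <- sumN_scal. apply Rle_trans with (1 * sumN N (fun j => / RM * Rabs (u j))).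
  - apply Rmult_le_compat; [lra|apply Rabs_pos|lra|].
    apply Rabs_sum_ne_le; [lia|]. intros j _.
    eapply Rle_trans; [apply Rabs_kernel_term_le, weight_bounds|].
    pose proof (weight_bounds i j). pose proof (Rabs_pos (u j)).
    replace (/ RM * Rabs (u j)) with (2 * / (2 * RM) * Rabs (u j)) by (field; lra). nra.
  - lra.
Qed.

Lemma interaction_lipschitz K w w' i : (i < N)%nat -> 0 <= K ->
  (forall j, (j < N)%nat -> Rabs (w' j) <= K) ->
  Rabs (interaction w i - interaction w' i)
    <= INR N * ((1 + K / sr) / RM) * sumN N (fun j => Rabs (w j - w' j)).
Proof.
  intros Hi HK Hw'. pose proof inv_pred_N_bounds.
  set (S := sumN N (fun j => Rabs (w j - w' j))).
  assert (HS : forall j, (j < N)%nat -> Rabs (w j - w' j) <= S)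
    by (intros j Hj; apply (sumN_ge_term N (fun j => Rabs (w j - w' j))); [exact Hj|intros; apply Rabs_pos]).
  assert (HS0 : 0 <= S) by (apply sumN_nonneg; intros; apply Rabs_pos).
  assert (Hsr : 0 < / sr) by (apply Rinv_0_lt_compat, sr_pos).
  unfold interaction. rewrite <- Rmult_minus_distr_l, sum_ne_minus, Rabs_mult,
    (Rabs_right (/ INR (N - 1))) by lra.
  rewrite <- (Rmult_1_l (INR N * _ * S)). apply Rmult_le_compat; [lra|apply Rabs_pos|lra|].
  rewrite Rmult_assoc, <- sumN_const. apply Rabs_sum_ne_le; [lia|]. intros j Hj.
  pose proof (weight_bounds i j).
  eapply Rle_trans; [apply (kernel_term_lipschitz _ _ _ _ _ _ K); [lra|exact Hsr|apply Hw', Hj]|].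
  pose proof (HS j Hj). pose proof (HS i Hi).
  apply Rle_trans with (/ (2 * RM) * (2 * S + K * / sr * (S + S))).
  - apply Rmult_le_compat; [lra|pose proof (Rabs_pos (w j - w' j)); pose proof (Rabs_pos (w i - w' i));
      pose proof (Rmult_le_pos K (/ sr)); nra|lra|].
    apply Rplus_le_compat; [lra|]. apply Rmult_le_compat_l; [apply Rmult_le_pos; lra|lra].
  - right. field. lra.
Qed.

Definition gam_sum : R := sumN N gam.
Definition cap_sum : R := sumN N (fun j => Rabs (ln (Sc j / sm))).
Definition growth_offset : R := gam_sum * cap_sum.
Definition growth_slope : R := gam_sum * (cap_sum / RM + 1).
Definition log_rhs_lip (K : R) : R := gam_sum * (cap_sum * (INR N * ((1 + K / sr) / RM)) + 1).

Lemma gam_le_gam_sum i : (i < N)%nat -> gam i <= gam_sum.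
Proof. intros Hi. apply sumN_ge_term; [exact Hi|intros; left; now apply gam_pos]. Qed.

Lemma cap_le_cap_sum i : (i < N)%nat -> Rabs (ln (Sc i / sm)) <= cap_sum.
Proof.
  intros Hi. apply (sumN_ge_term N (fun j => Rabs (ln (Sc j / sm)))); [exact Hi|intros; apply Rabs_pos].
Qed.

Lemma gam_sum_ge0 : 0 <= gam_sum.
Proof. apply sumN_nonneg. intros; left; now apply gam_pos. Qed.

Lemma cap_sum_ge0 : 0 <= cap_sum.
Proof. apply sumN_nonneg. intros; apply Rabs_pos. Qed.

Lemma growth_offset_ge0 : 0 <= growth_offset.
Proof. apply Rmult_le_pos; [apply gam_sum_ge0|apply cap_sum_ge0]. Qed.

Lemma growth_slope_ge0 : 0 <= growth_slope.
Proof.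
  apply Rmult_le_pos; [apply gam_sum_ge0|]. pose proof cap_sum_ge0.
  assert (0 <= cap_sum / RM) by (apply Rdiv_le_0_compat; lra). lra.
Qed.

Lemma log_rhs_lip_ge0 K : 0 <= K -> 0 <= log_rhs_lip K.
Proof.
  intros HK. apply Rmult_le_pos; [apply gam_sum_ge0|]. pose proof cap_sum_ge0. pose proof (pos_INR N).
  assert (0 <= K / sr) by (apply Rdiv_le_0_compat; lra).
  assert (0 <= (1 + K / sr) / RM) by (apply Rdiv_le_0_compat; lra).
  assert (0 <= cap_sum * (INR N * ((1 + K / sr) / RM))) by (apply Rmult_le_pos; [|apply Rmult_le_pos]; lra).
  lra.
Qed.

Lemma Rabs_log_rhs_le u i : (i < N)%nat ->
  Rabs (log_rhs u i) <= growth_offset + growth_slope * sumN N (fun j => Rabs (u j)).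
Proof.
  intros Hi. unfold log_rhs, growth_offset, growth_slope.
  set (S := sumN N (fun j => Rabs (u j))).
  assert (HS : 0 <= S) by (apply sumN_nonneg; intros; apply Rabs_pos).
  assert (Hui : Rabs (u i) <= S)
    by (apply (sumN_ge_term N (fun j => Rabs (u j))); [exact Hi|intros; apply Rabs_pos]).
  pose proof (Rabs_interaction_le u i) as HI. fold S in HI.
  pose proof (gam_le_gam_sum i Hi). pose proof (gam_pos i Hi). pose proof (cap_le_cap_sum i Hi).
  pose proof cap_sum_ge0.
  assert (Hin : Rabs (ln (Sc i / sm) * (1 - interaction u i) - u i) <= cap_sum + (cap_sum / RM + 1) * S).
  { unfold Rminus at 1. eapply Rle_trans; [apply Rabs_triang|]. rewrite Rabs_Ropp, Rabs_mult.
    assert (Hone : Rabs (1 - interaction u i) <= 1 + / RM * S).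
    { unfold Rminus. eapply Rle_trans; [apply Rabs_triang|]. rewrite Rabs_R1, Rabs_Ropp. lra. }
    assert (0 <= / RM * S) by (apply Rmult_le_pos; [left; apply Rinv_0_lt_compat|]; lra).
    apply Rle_trans with (cap_sum * (1 + / RM * S) + S).
    - apply Rplus_le_compat; [apply Rmult_le_compat; [apply Rabs_pos|apply Rabs_pos|lra|lra]|lra].
    - right. unfold Rdiv. ring. }
  rewrite Rabs_mult, (Rabs_right (gam i)) by lra.
  apply Rle_trans with (gam_sum * (cap_sum + (cap_sum / RM + 1) * S)); [|right; ring].
  apply Rmult_le_compat; [lra|apply Rabs_pos|lra|exact Hin].
Qed.

Lemma log_rhs_lipschitz K w w' i : (i < N)%nat ->
  (forall j, (j < N)%nat -> Rabs (w j) <= K) -> (forall j, (j < N)%nat -> Rabs (w' j) <= K) ->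
  Rabs (log_rhs w i - log_rhs w' i) <= log_rhs_lip K * sumN N (fun j => Rabs (w j - w' j)).
Proof.
  intros Hi _ Hw'. assert (HK : 0 <= K) by (eapply Rle_trans; [apply Rabs_pos|apply (Hw' i Hi)]).
  set (S := sumN N (fun j => Rabs (w j - w' j))).
  assert (HS : 0 <= S) by (apply sumN_nonneg; intros; apply Rabs_pos).
  assert (Hdi : Rabs (w i - w' i) <= S)
    by (apply (sumN_ge_term N (fun j => Rabs (w j - w' j))); [exact Hi|intros; apply Rabs_pos]).
  pose proof (interaction_lipschitz K w w' i Hi HK Hw') as HI. fold S in HI.
  set (c := INR N * ((1 + K / sr) / RM)) in HI.
  assert (Hc : 0 <= c).
  { apply Rmult_le_pos; [apply pos_INR|].
    apply Rdiv_le_0_compat; [assert (0 <= K / sr) by (apply Rdiv_le_0_compat; lra); lra|lra]. }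
  pose proof (gam_le_gam_sum i Hi). pose proof (gam_pos i Hi). pose proof (cap_le_cap_sum i Hi).
  pose proof cap_sum_ge0.
  unfold log_rhs. replace (gam i * _ - gam i * _) with
    (gam i * (- ln (Sc i / sm) * (interaction w i - interaction w' i) - (w i - w' i))) by ring.
  rewrite Rabs_mult, (Rabs_right (gam i)) by lra.
  apply Rle_trans with (gam_sum * (cap_sum * (c * S) + S)); [|right; unfold log_rhs_lip; fold c; ring].
  apply Rmult_le_compat; [lra|apply Rabs_pos|lra|].
  unfold Rminus at 1. eapply Rle_trans; [apply Rabs_triang|]. rewrite Rabs_Ropp, Rabs_mult, Rabs_Ropp.
  apply Rplus_le_compat; [apply Rmult_le_compat; [apply Rabs_pos|apply Rabs_pos|lra|lra]|lra].
Qed.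

Definition log_init (j : nat) : R := ln (s0 j / sm).

Definition log_sol : nat -> R -> R := global_sol N log_rhs growth_offset growth_slope log_init.

Definition model_sol (i : nat) (t : R) : R := sm * exp (log_sol i t).

Lemma model_sol_is_solution : is_solution N sm sx sr RM x y Sc gam s0 model_sol.
Proof.
  split.
  - intros i Hi. unfold model_sol, log_sol. rewrite global_sol_init. unfold log_init.
    rewrite exp_ln by (apply Rdiv_lt_0_compat; auto). field. lra.
  - intros i t Hi Ht. pose proof (le_ceil_nat (t + 1) ltac:(lra)). set (m := ceil_nat (t + 1)) in *.
    set (v := trunc_sol N log_rhs growth_offset growth_slope log_init m).
    assert (Hv : forall j tau, (j < N)%nat -> 0 <= tau <= INR m -> log_sol j tau = v j tau)
      by (intros j tau Hj Htau; exact (global_sol_eq N log_rhs _ _ log_rhs_lip growth_offset_ge0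
            growth_slope_ge0 Rabs_log_rhs_le log_rhs_lip_ge0 log_rhs_lipschitz log_init m j tau Hj Htau)).
    apply (derivable_has_deriv_Rplus _ (fun tau => sm * exp (v i tau))); [exact Ht| |].
    + rewrite (rhs_log_change _ (fun j => v j t) i Hi)
        by (intros j Hj; unfold model_sol; rewrite Hv by (exact Hj || lra); reflexivity).
      unfold model_sol. rewrite Hv by (exact Hi || lra). rewrite Rmult_assoc.
      apply derivable_pt_lim_scal, (derivable_pt_lim_comp (v i) exp); [|apply derivable_pt_lim_exp].
      exact (trunc_sol_derivable N log_rhs _ _ log_rhs_lip growth_offset_ge0 growth_slope_ge0
               Rabs_log_rhs_le log_rhs_lip_ge0 log_rhs_lipschitz log_init m i t Hi ltac:(lra)).
    + intros tau Htau. unfold model_sol. rewrite Hv by (exact Hi || lra). reflexivity.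
Qed.

Definition log_of (s : nat -> R -> R) (i : nat) (tau : R) : R := ln (s i (Rmax 0 tau) / sm).

Lemma sm_exp_log_of s i tau : 0 <= tau -> 0 < s i tau -> sm * exp (log_of s i tau) = s i tau.
Proof.
  intros Htau Hpos. unfold log_of. rewrite Rmax_right, exp_ln by (apply Rdiv_lt_0_compat || idtac; lra).
  field. lra.
Qed.

Lemma log_of_solves s T : is_solution N sm sx sr RM x y Sc gam s0 s ->
  (forall i tau, (i < N)%nat -> 0 <= tau <= T -> 0 < s i tau) ->
  solves_on N log_rhs log_init T (log_of s).
Proof.
  intros [Hs0 Hsd] Hpos.
  assert (Hln : forall z, 0 < z -> derivable_pt_lim (fun z => ln (z / sm)) z (/ z)).
  { intros z Hz. apply is_derive_Reals. auto_derive; [apply Rdiv_lt_0_compat; lra|field; lra]. }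
  split; [|split].
  - intros i t Hi Ht. pose proof (Hpos i t Hi Ht).
    apply (continuity_pt_comp (fun tau => s i (Rmax 0 tau)) (fun z => ln (z / sm))).
    + exact (has_deriv_Rplus_continuity_pt_Rmax0 _ _ _ (proj1 Ht) (Hsd i t Hi (proj1 Ht))).
    + apply derivable_continuous_pt. exists (/ s i (Rmax 0 t)).
      apply Hln. rewrite Rmax_right; lra.
  - intros i t Hi Ht. pose proof (Hpos i t Hi ltac:(lra)) as Hsi.
    rewrite <- (Rmult_1_l (log_rhs _ i)), <- (Rinv_l (s i t)) by lra. rewrite Rmult_assoc.
    rewrite <- (rhs_log_change (fun j => s j t)) by (first [exact Hi|intros j Hj; symmetry;
      apply sm_exp_log_of; [lra|apply Hpos; [exact Hj|lra]]]).
    replace (/ s i t) with (/ s i (Rmax 0 t)) by (rewrite Rmax_right; lra).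
    apply (derivable_pt_lim_comp (fun tau => s i (Rmax 0 tau)) (fun z => ln (z / sm)));
      [|apply Hln; rewrite Rmax_right; lra].
    apply (derivable_pt_lim_locally_ext (s i) _ t 0 (t + 1)); [lra| |].
    + intros z Hz. rewrite Rmax_right; lra.
    + apply has_deriv_Rplus_derivable, Hsd; [lra|exact Hi|lra].
  - intros i Hi. unfold log_of, log_init. rewrite Rmax_left, Hs0 by (exact Hi || lra). reflexivity.
Qed.

Let envelope_log := envelope N growth_offset growth_slope log_init.

Lemma envelope_log_le t t' : t <= t' -> envelope_log t <= envelope_log t'.
Proof. apply envelope_le; [apply growth_offset_ge0|apply growth_slope_ge0]. Qed.

Lemma solution_lower_bound s T : is_solution N sm sx sr RM x y Sc gam s0 s ->
  (forall i tau, (i < N)%nat -> 0 <= tau <= T -> 0 < s i tau) ->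
  forall i tau, (i < N)%nat -> 0 <= tau <= T -> sm * exp (- envelope_log T) <= s i tau.
Proof.
  intros Hs Hpos i tau Hi Htau.
  pose proof (solves_on_bound N log_rhs _ _ growth_offset_ge0 growth_slope_ge0
    Rabs_log_rhs_le log_init T (log_of s)
    (log_of_solves s T Hs Hpos) i tau Hi Htau) as Hbound.
  pose proof (envelope_log_le tau T ltac:(lra)) as Hmono.
  rewrite <- (sm_exp_log_of s i tau) by (first [lra|apply Hpos; [exact Hi|lra]]).
  apply Rmult_le_compat_l; [lra|]. apply exp_le_compat.
  apply Rabs_le_between in Hbound. fold envelope_log in Hbound. lra.
Qed.

Lemma solution_pos s : is_solution N sm sx sr RM x y Sc gam s0 s ->
  forall i t, (i < N)%nat -> 0 <= t -> 0 < s i t.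
Proof.
  intros Hs i t Hi Ht. pose proof Hs as [Hs0 Hsd].
  enough (HP : forall tau, 0 <= tau <= t -> forall j, (j < N)%nat -> 0 < s j tau)
    by (apply HP; [lra|exact Hi]).
  apply (continuous_induction (fun tau => forall j, (j < N)%nat -> 0 < s j tau) t Ht).
  - intros tau Htau Hbelow j Hj. destruct (Req_dec tau 0) as [->|Hne]; [rewrite Hs0; auto|].
    apply Rlt_le_trans with (sm * exp (- envelope_log tau)); [apply Rmult_lt_0_compat; [lra|apply exp_pos]|].
    apply (has_deriv_Rplus_ge_left (s j) tau _ _ ltac:(lra) (Hsd j tau Hj ltac:(lra))).
    intros u Hu. apply Rle_trans with (sm * exp (- envelope_log u)).
    + apply Rmult_le_compat_l; [lra|]. apply exp_le_compat, Ropp_le_contravar, envelope_log_le. lra.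
    + apply (solution_lower_bound s u Hs); [|exact Hj|lra].
      intros k v Hk Hv. apply Hbelow; [lra|exact Hk].
  - intros tau Htau HP.
    destruct (exists_common_radius N (fun j e => forall u, tau < u < tau + e -> 0 < s j u))
      as [e [He Hcommon]].
    + intros j e e' H He' u Hu. apply H. lra.
    + intros j Hj. apply (has_deriv_Rplus_pos_right (s j) tau _ ltac:(lra) (Hsd j tau Hj ltac:(lra))).
      apply HP; [lra|exact Hj].
    + exists e. split; [exact He|]. intros u Hu j Hj. now apply Hcommon.
Qed.

Lemma solution_eq_model_sol s : is_solution N sm sx sr RM x y Sc gam s0 s ->
  forall i t, (i < N)%nat -> 0 <= t -> s i t = model_sol i t.
Proof.
  intros Hs i t Hi Ht.
  assert (Hpos : forall j tau, (j < N)%nat -> 0 <= tau <= t -> 0 < s j tau)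
    by (intros j tau Hj Htau; apply (solution_pos s Hs); [exact Hj|lra]).
  rewrite <- (sm_exp_log_of s i t Ht) by (apply Hpos; [exact Hi|lra]).
  unfold model_sol, log_sol. f_equal. f_equal.
  exact (solves_on_global_sol N log_rhs _ _ log_rhs_lip growth_offset_ge0 growth_slope_ge0
    Rabs_log_rhs_le log_rhs_lip_ge0 log_rhs_lipschitz log_init t (log_of s) Ht
    (log_of_solves s t Hs Hpos) i t Hi ltac:(lra)).
Qed.

End Model.

Theorem proposition1 (N : nat) (sm sx sr RM : R) (s0 x y Sc gam : nat -> R) :
  (2 <= N)%nat ->
  0 < sm -> 0 < sx -> 0 < sr -> 0 < RM ->
  (forall i, (i < N)%nat -> 0 < s0 i) ->
  (forall i, (i < N)%nat -> 0 < Sc i) ->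
  (forall i, (i < N)%nat -> 0 < gam i) ->
  (forall i, (i < N)%nat -> ln (Sc i / sm) <= RM) ->
  exists s : nat -> R -> R,
    is_solution N sm sx sr RM x y Sc gam s0 s /\
    (forall i t, (i < N)%nat -> 0 <= t -> 0 < s i t) /\
    (forall s' : nat -> R -> R, is_solution N sm sx sr RM x y Sc gam s0 s' ->
       forall i t, (i < N)%nat -> 0 <= t -> s' i t = s i t).
Proof.
  intros HN Hsm Hsx Hsr HRM Hs0 _ Hgam _.
  exists (model_sol N sm sx sr RM x y Sc gam s0). split; [|split].
  - now apply model_sol_is_solution.
  - intros i t _ _. apply Rmult_lt_0_compat; [exact Hsm|apply exp_pos].
  - intros s Hs i t Hi Ht. now apply (solution_eq_model_sol N sm sx sr RM x y Sc gam s0).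
Qed.
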